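(* Let $S$ be a system of dimension $m\ge2$ with Hamiltonian $H_S$, maximal energy $E^S_{\max}$, Gibbs state $\tau_S$ and partition function $Z_S=\mathrm{tr}(e^{-\beta H_S})$, and let $\Pi^S_{\max}=|E^S_{\max}\rangle\langle E^S_{\max}|$ be a pure eigenstate of energy $E^S_{\max}$. Let the catalyst $C$ have a Hamiltonian $H_C$ with discrete spectrum consisting of nonnegative eigenvalues $E^C_1\le E^C_2\le\cdots$ (with multiplicity), $E^C_j\to\infty$, and finite partition function $Z_C=\sum_j e^{-\beta E^C_j}<\infty$. Let $\omega_C,\omega'_C$ be catalyst states diagonal in the eigenbasis of $H_C$, such that $\omega_C\otimes\tau_S\to\omega'_C\otimes\Pi^S_{\max}$ is possible by catalytic thermal operations, and such that $\omega_C$ has average energy $\mathrm{tr}(\omega_CH_C)\le E$ for a finite constant $E\ge E^C_1$. Then $$d_{\rm opt}:=\tfrac12\|\omega_C-\omega'_C\|_1\ \ge\ \frac12\,\frac{f(A)^2\varepsilon_C^2}{Z_C}>0,$$ where $A=Z_S/e^{-\beta E^S_{\max}}$, $f(a)=\frac12\frac{a^2}{a^2+1}$, $\varepsilon_C=\sup_{W\in(0,1)}W\gamma^{E^C_{j(W)}}$ with $\gamma=e^{-\beta}$, and $j(W)=\min\{j\ge1: E^C_{j+1}>E/(1-W)\}$.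
   Context: $\beta>0$ is the inverse temperature of the bath. A transformation $\rho\to\rho'$ on a system with Gibbs state $\tau$ being possible by catalytic thermal operations implies (known fact, may be assumed) that $D_\alpha(\rho\|\tau)\ge D_\alpha(\rho'\|\tau)$ for all $\alpha\ge0$; here the relevant system is $CS$ with Gibbs state $\tau_C\otimes\tau_S$, $\tau_C=e^{-\beta H_C}/Z_C$. For commuting states with eigenvalue vectors $p,q$, $D_\alpha(p\|q)=\frac{1}{\alpha-1}\log\sum_ip_i^\alpha q_i^{1-\alpha}$; in particular $D_{1/2}(p\|q)=-2\log\sum_i\sqrt{p_iq_i}$. For diagonal catalysts with eigenvalues $\omega_j,\omega'_j$ the $\alpha=1/2$ condition reads $\sum_j\sqrt{\omega'_j}\,e^{-\beta E^C_j/2}\ge\sqrt{A}\sum_j\sqrt{\omega_j}\,e^{-\beta E^C_j/2}$. *)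

From Stdlib Require Import Reals Lra Lia.
Open Scope R_scope.

(* Real power with the convention 0^a = 0 (used for a > 0);
   Stdlib's Rpower would give Rpower 0 a = 1. *)
Definition rpow (x a : R) : R :=
  if Rle_dec x 0 then 0 else Rpower x a.

(* Finite sum over system indices i = 0 .. m-1 (m >= 1). *)
Definition sumS (m : nat) (f : nat -> R) : R := sum_f_R0 f (pred m).

Definition boltz (beta E : R) : R := exp (- beta * E).

Definition ZS (beta : R) (m : nat) (ES : nat -> R) : R :=
  sumS m (fun i => boltz beta (ES i)).

Definition tauS (beta : R) (m : nat) (ES : nat -> R) (i : nat) : R :=
  boltz beta (ES i) / ZS beta m ES.

(* Pure eigenstate |E_max><E_max| of the system (index kmax), as eigenvalue vector. *)
Definition PiMax (kmax i : nat) : R := if Nat.eqb i kmax then 1 else 0.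

(* Renyi divergence for commuting states on C S, with eigenvalue arrays
   p, q : nat (catalyst index) -> nat (system index) -> R, given the value L of
   the (convergent) series sum_j sum_{i<m} p_ji^alpha q_ji^(1-alpha). *)
Definition renyi_series (m : nat) (alpha : R) (p q : nat -> nat -> R) (j : nat) : R :=
  sumS m (fun i => rpow (p j i) alpha * rpow (q j i) (1 - alpha)).

Definition renyi_of_sum (alpha L : R) : R := / (alpha - 1) * ln L.

Definition fA (a : R) : R := / 2 * (a ^ 2 / (a ^ 2 + 1)).

(* The set {W gamma^(E^C_{j(W)}) : W in (0,1)}, with 0-based catalyst indices:
   e k = E^C_{k+1}.  j(W) = min{ j >= 1 : E^C_{j+1} > Ebar/(1-W) } corresponds to
   k = j-1 = min{ k >= 0 : e (k+1) > Ebar/(1-W) }, and E^C_{j(W)} = e k. *)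
Definition eps_set (beta Ebar : R) (e : nat -> R) (x : R) : Prop :=
  exists W k, 0 < W < 1 /\
    e (S k) > Ebar / (1 - W) /\
    (forall k', (k' < k)%nat -> e (S k') <= Ebar / (1 - W)) /\
    x = W * exp (- beta * e k).

From Stdlib Require Import Reals Lra Lia ConstructiveEpsilon.
From Coquelicot Require Import Coquelicot.
Open Scope R_scope.

(* At [alpha = 1/2] the Renyi divergence is [-2 log] of a Bhattacharyya coefficient. With
   U, V the Bhattacharyya coefficients of [omega_C], [omega'_C] against [tau_C], the system
   factor contributes [sum_i tau_S i = 1] for [omega_C (x) tau_S] but only
   [sqrt (tau_S E_max) = 1 / sqrt A] for [omega'_C (x) Pi_max]; so monotonicity gives
   [sqrt A * U <= V]. A weighted AM-GM bounds [V - U] by [d / t + t / 2] for every [t > 0], and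
   [t = (sqrt A - 1) U] gives [d >= (sqrt A - 1)^2 U^2 / 2]. Finally [f A <= sqrt A - 1] for
   [A >= 2], and the energy constraint (Markov) leaves mass [W] on the levels up to [j(W)],
   whence [W gamma^(E_j(W)) <= sqrt Z_C * U], i.e. [eps_C <= sqrt Z_C * U]. *)

Lemma infinite_sum_ext a b la :
  (forall n, a n = b n) -> infinite_sum a la -> infinite_sum b la.
Proof.
  intros E Ha. apply is_series_Reals. apply is_series_Reals in Ha.
  exact (is_series_ext _ _ _ E Ha).
Qed.

Lemma infinite_sum_plus a b la lb :
  infinite_sum a la -> infinite_sum b lb -> infinite_sum (fun n => a n + b n) (la + lb).
Proof.
  intros Ha Hb. apply is_series_Reals. apply is_series_Reals in Ha, Hb.
  exact (is_series_plus _ _ _ _ Ha Hb).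
Qed.

Lemma infinite_sum_scal c a la :
  infinite_sum a la -> infinite_sum (fun n => c * a n) (c * la).
Proof.
  intros Ha. apply is_series_Reals. apply is_series_Reals in Ha.
  exact (is_series_scal _ _ _ Ha).
Qed.

Lemma infinite_sum_minus a b la lb :
  infinite_sum a la -> infinite_sum b lb -> infinite_sum (fun n => a n - b n) (la - lb).
Proof.
  intros Ha Hb. apply is_series_Reals. apply is_series_Reals in Ha, Hb.
  exact (is_series_minus _ _ _ _ Ha Hb).
Qed.

Lemma infinite_sum_le a b la lb :
  (forall n, a n <= b n) -> infinite_sum a la -> infinite_sum b lb -> la <= lb.
Proof.
  intros H Ha Hb. apply is_lim_seq_Reals in Ha, Hb.
  exact (is_lim_seq_le _ _ _ _ (fun n => sum_growing a b n H) Ha Hb).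
Qed.

Lemma infinite_sum_term_le a la :
  infinite_sum a la -> (forall n, 0 <= a n) -> forall n, a n <= la.
Proof.
  intros Ha Hpos n. apply Rle_trans with (sum_f_R0 a n); [|exact (sum_incr a n la Ha Hpos)].
  destruct n as [|n]; simpl; [lra|]. pose proof (cond_pos_sum a n Hpos). lra.
Qed.

Lemma infinite_sum_nonneg a la : infinite_sum a la -> (forall n, 0 <= a n) -> 0 <= la.
Proof. intros Ha Hpos. exact (Rle_trans _ _ _ (Hpos 0%nat) (infinite_sum_term_le a la Ha Hpos 0%nat)). Qed.

Lemma sum_f_R0_truncate x k n : (k <= n)%nat ->
  sum_f_R0 (fun j => if Nat.leb j k then x j else 0) n = sum_f_R0 x k.
Proof.
  induction 1 as [|n Hkn IH].
  - apply sum_eq. intros i Hi. destruct (Nat.leb_spec i k); [reflexivity|lia].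
  - rewrite tech5, IH. destruct (Nat.leb_spec (S n) k); [lia|ring].
Qed.

Lemma infinite_sum_truncate x k :
  infinite_sum (fun j => if Nat.leb j k then x j else 0) (sum_f_R0 x k).
Proof.
  intros eps Heps. exists k. intros n Hn. rewrite sum_f_R0_truncate by lia.
  unfold Rdist. rewrite Rminus_eq_0, Rabs_R0. lra.
Qed.

Lemma sum_f_R0_indicator c k n : (k <= n)%nat ->
  sum_f_R0 (fun i => if Nat.eqb i k then c else 0) n = c.
Proof.
  induction 1 as [|n Hkn IH].
  - destruct k as [|k]; [reflexivity|].
    rewrite tech5, Nat.eqb_refl, (sum_eq _ (fun _ => 0)), sum_cte; [ring|].
    intros i Hi. destruct (Nat.eqb_spec i (S k)); [lia|reflexivity].
  - rewrite tech5, IH. destruct (Nat.eqb_spec (S n) k); [lia|ring].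
Qed.

Lemma sum_f_R0_ge_const f c n :
  (forall i, (i <= n)%nat -> c <= f i) -> INR (S n) * c <= sum_f_R0 f n.
Proof.
  induction n as [|n IH]; intros H.
  - simpl. specialize (H 0%nat (le_n _)). lra.
  - rewrite tech5, S_INR, Rmult_plus_distr_r.
    assert (INR (S n) * c <= sum_f_R0 f n) by (apply IH; intros; apply H; lia).
    specialize (H (S n) (le_n _)). lra.
Qed.

Lemma le_sqrt_self x : 0 <= x <= 1 -> x <= sqrt x.
Proof.
  intros [H0 H1]. assert (sqrt x <= 1) by (rewrite <- sqrt_1; apply sqrt_le_1_alt; lra).
  pose proof (sqrt_pos x). pose proof (sqrt_sqrt x H0). nra.
Qed.

Lemma sqrt_mul_le_avg x y : 0 <= x -> 0 <= y -> sqrt (x * y) <= (x + y) / 2.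
Proof.
  intros Hx Hy. rewrite sqrt_mult by assumption.
  pose proof (sqrt_sqrt x Hx). pose proof (sqrt_sqrt y Hy).
  pose proof (Rle_0_sqr (sqrt x - sqrt y)). unfold Rsqr in *. nra.
Qed.

(* The square-root gap is controlled by [|a - b|] since [|sqrt a - sqrt b| <= sqrt a + sqrt b];
   the [t]-weighted AM-GM then splits the product. *)
Lemma sqrt_gap_mul_le a b h t : 0 <= a -> 0 <= b -> 0 <= h -> 0 < t ->
  (sqrt b - sqrt a) * sqrt h <= / t * (/ 2 * Rabs (a - b)) + t / 2 * h.
Proof.
  intros Ha Hb Hh Ht.
  set (sa := sqrt a). set (sb := sqrt b). set (sh := sqrt h).
  assert (Ea : sa * sa = a) by exact (sqrt_sqrt a Ha).
  assert (Eb : sb * sb = b) by exact (sqrt_sqrt b Hb).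
  assert (Eh : sh * sh = h) by exact (sqrt_sqrt h Hh).
  assert (sa_pos : 0 <= sa) by apply sqrt_pos.
  assert (sb_pos : 0 <= sb) by apply sqrt_pos.
  assert (sh_pos : 0 <= sh) by apply sqrt_pos.
  assert (Hgap : (sb - sa) * (sb - sa) <= Rabs (a - b)).
  { destruct (Rle_dec sa sb).
    - rewrite Rabs_left1 by nra. nra.
    - rewrite Rabs_right by nra. nra. }
  assert (Hamgm : 2 * t * ((sb - sa) * sh) <= (sb - sa) * (sb - sa) + t * t * h).
  { pose proof (Rle_0_sqr (sb - sa - t * sh)). unfold Rsqr in *. nra. }
  apply Rmult_le_reg_l with (2 * t); [lra|].
  replace (2 * t * (/ t * (/ 2 * Rabs (a - b)) + t / 2 * h))
    with (Rabs (a - b) + t * t * h) by (field; lra).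
  lra.
Qed.

Lemma boltz_pos beta E : 0 < boltz beta E.
Proof. apply exp_pos. Qed.

Lemma boltz_le beta E E' : 0 <= beta -> E <= E' -> boltz beta E' <= boltz beta E.
Proof.
  intros Hb HE. unfold boltz.
  destruct (Rle_lt_or_eq_dec (- beta * E') (- beta * E)) as [Hlt|Heq]; [nra| |].
  - left. exact (exp_increasing _ _ Hlt).
  - rewrite Heq. lra.
Qed.

Lemma tail_mass_le p e k T Ep :
  (forall j, 0 <= p j) -> (forall j, 0 <= e j) -> (forall j, (k < j)%nat -> T <= e j) ->
  infinite_sum p 1 -> infinite_sum (fun j => p j * e j) Ep ->
  T * (1 - sum_f_R0 p k) <= Ep.
Proof.
  intros Hp He HT Hp1 HEp.
  assert (Hsplit : infinite_sum (fun j => p j * e j - T * p j + T * (if Nat.leb j k then p j else 0))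
                     (Ep - T * 1 + T * sum_f_R0 p k)).
  { apply infinite_sum_plus; [apply infinite_sum_minus|]; try apply infinite_sum_scal;
      auto using infinite_sum_truncate. }
  enough (0 <= Ep - T * 1 + T * sum_f_R0 p k) by lra.
  apply (infinite_sum_nonneg _ _ Hsplit). intros j. destruct (Nat.leb_spec j k).
  - pose proof (Hp j). pose proof (He j). nra.
  - pose proof (HT j ltac:(lia)). pose proof (Hp j). nra.
Qed.

Lemma probability_le_1 p : (forall j, 0 <= p j) -> infinite_sum p 1 -> forall j, 0 <= p j <= 1.
Proof. intros Hp Hp1 j. split; [apply Hp|exact (infinite_sum_term_le p 1 Hp1 Hp j)]. Qed.

Lemma bhattacharyya_summable p q :
  (forall j, 0 <= p j) -> (forall j, 0 <= q j) -> infinite_sum p 1 -> infinite_sum q 1 ->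
  exists F, infinite_sum (fun j => sqrt (p j * q j)) F.
Proof.
  intros Hp Hq Hp1 Hq1.
  assert (Havg : infinite_sum (fun j => / 2 * (p j + q j)) 1).
  { replace 1 with (/ 2 * (1 + 1)) by field.
    apply infinite_sum_scal, infinite_sum_plus; assumption. }
  destruct (Rseries_CV_comp (fun j => sqrt (p j * q j)) (fun j => / 2 * (p j + q j))) as [F HF].
  - intros j. split; [apply sqrt_pos|].
    pose proof (sqrt_mul_le_avg (p j) (q j) (Hp j) (Hq j)). lra.
  - exists 1. exact Havg.
  - exists F. exact HF.
Qed.

Lemma bhattacharyya_partial_ge p q k :
  (forall j, 0 <= p j <= 1) -> (forall j, 0 <= q j) -> (forall j, (j <= k)%nat -> q k <= q j) ->
  sqrt (q k) * sum_f_R0 p k <= sum_f_R0 (fun j => sqrt (p j * q j)) k.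
Proof.
  intros Hp Hq Hqk. rewrite scal_sum. apply sum_Rle. intros j Hj.
  rewrite sqrt_mult by (apply Hp || apply Hq).
  apply Rmult_le_compat; [apply Hp|apply sqrt_pos|apply le_sqrt_self, Hp|].
  apply sqrt_le_1_alt, Hqk, Hj.
Qed.

Lemma bhattacharyya_pos p q F :
  (forall j, 0 <= p j) -> infinite_sum p 1 -> (forall j, 0 < q j) ->
  (forall i j, (i <= j)%nat -> q j <= q i) ->
  infinite_sum (fun j => sqrt (p j * q j)) F -> 0 < F.
Proof.
  intros Hp Hp1 Hq Hq_anti HF.
  destruct (Hp1 (/ 2)) as [N HN]; [lra|].
  specialize (HN N (le_n _)). unfold Rdist in HN. apply Rabs_def2 in HN.
  pose proof (bhattacharyya_partial_ge p q N (probability_le_1 p Hp Hp1)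
                (fun j => Rlt_le _ _ (Hq j)) (fun j Hj => Hq_anti j N Hj)).
  assert (0 < sqrt (q N)) by (apply sqrt_lt_R0, Hq).
  pose proof (sum_incr _ N F HF (fun j => sqrt_pos (p j * q j))).
  nra.
Qed.

Lemma trace_distance_ge_bhattacharyya_gap p p' g U V d t :
  (forall j, 0 <= p j) -> (forall j, 0 <= p' j) -> (forall j, 0 <= g j) -> infinite_sum g 1 ->
  infinite_sum (fun j => sqrt (p j * g j)) U -> infinite_sum (fun j => sqrt (p' j * g j)) V ->
  infinite_sum (fun j => / 2 * Rabs (p j - p' j)) d ->
  0 < t -> t <= V - U -> t * t / 2 <= d.
Proof.
  intros Hp Hp' Hg Hg1 HU HV Hd Ht HtVU.
  assert (Hgap : V - U <= / t * d + t / 2 * 1).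
  { apply (infinite_sum_le (fun j => sqrt (p' j * g j) - sqrt (p j * g j))
                           (fun j => / t * (/ 2 * Rabs (p j - p' j)) + t / 2 * g j)).
    - intros j. rewrite !sqrt_mult by auto.
      pose proof (sqrt_gap_mul_le (p j) (p' j) (g j) t (Hp j) (Hp' j) (Hg j) Ht). lra.
    - apply infinite_sum_minus; assumption.
    - apply infinite_sum_plus; apply infinite_sum_scal; assumption. }
  apply Rmult_le_compat_l with (r := t) in Hgap; [|lra].
  replace (t * (/ t * d + t / 2 * 1)) with (d + t * t / 2) in Hgap by (field; lra).
  nra.
Qed.

Lemma trace_distance_ge_bhattacharyya_ratio p p' g U V d A :
  (forall j, 0 <= p j) -> (forall j, 0 <= p' j) -> (forall j, 0 <= g j) -> infinite_sum g 1 ->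
  infinite_sum (fun j => sqrt (p j * g j)) U -> infinite_sum (fun j => sqrt (p' j * g j)) V ->
  infinite_sum (fun j => / 2 * Rabs (p j - p' j)) d ->
  1 < A -> 0 < U -> U <= V * / sqrt A -> ((sqrt A - 1) * U) ^ 2 / 2 <= d.
Proof.
  intros Hp Hp' Hg Hg1 HU HV Hd HA HU0 HUV.
  assert (Hs : 1 < sqrt A) by (rewrite <- sqrt_1; apply sqrt_lt_1_alt; lra).
  assert (Hgap : sqrt A * U <= V).
  { apply Rmult_le_compat_l with (r := sqrt A) in HUV; [|lra].
    replace (sqrt A * (V * / sqrt A)) with V in HUV by (field; lra). exact HUV. }
  replace (((sqrt A - 1) * U) ^ 2) with ((sqrt A - 1) * U * ((sqrt A - 1) * U)) by ring.
  apply (trace_distance_ge_bhattacharyya_gap p p' g U V); auto; nra.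
Qed.

Lemma rpow_half x : 0 <= x -> rpow x (/ 2) = sqrt x.
Proof.
  intros Hx. unfold rpow. destruct (Rle_dec x 0).
  - replace x with 0 by lra. rewrite sqrt_0. reflexivity.
  - apply Rpower_sqrt. lra.
Qed.

Lemma renyi_series_half_product m tau p q j :
  (forall i, 0 <= tau i) -> sumS m tau = 1 -> 0 <= p j -> 0 <= q j ->
  renyi_series m (/ 2) (fun j i => p j * tau i) (fun j i => q j * tau i) j = sqrt (p j * q j).
Proof.
  intros Htau Hsum Hp Hq. unfold renyi_series.
  replace (1 - / 2) with (/ 2) by field.
  rewrite <- (Rmult_1_r (sqrt (p j * q j))), <- Hsum. unfold sumS. rewrite scal_sum.
  apply sum_eq. intros i _.
  rewrite !rpow_half, <- sqrt_mult by (apply Rmult_le_pos; auto).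
  replace (p j * tau i * (q j * tau i)) with (p j * q j * (tau i * tau i)) by ring.
  rewrite sqrt_mult, sqrt_square by (auto using Rmult_le_pos). ring.
Qed.

Lemma renyi_series_half_pure m k tau p q j :
  (k < m)%nat -> 0 <= tau k -> 0 <= p j -> 0 <= q j ->
  renyi_series m (/ 2) (fun j i => p j * PiMax k i) (fun j i => q j * tau i) j
  = sqrt (p j * q j) * sqrt (tau k).
Proof.
  intros Hk Htau Hp Hq. unfold renyi_series, sumS.
  replace (1 - / 2) with (/ 2) by field.
  rewrite <- (sum_f_R0_indicator (sqrt (p j * q j) * sqrt (tau k)) k (pred m)) by lia.
  apply sum_eq. intros i _. unfold PiMax.
  destruct (Nat.eqb_spec i k) as [->|Hne].
  - rewrite Rmult_1_r, !rpow_half, !sqrt_mult by (auto using Rmult_le_pos). ring.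
  - rewrite Rmult_0_r. unfold rpow at 1. destruct (Rle_dec 0 0); [ring|lra].
Qed.

Lemma renyi_of_sum_half_ge L L' :
  0 < L' -> renyi_of_sum (/ 2) L >= renyi_of_sum (/ 2) L' -> L <= L'.
Proof.
  intros HL' H. unfold renyi_of_sum in H. replace (/ (/ 2 - 1)) with (-2) in H by field.
  destruct (Rle_dec L L') as [|Hlt]; [assumption|].
  assert (ln L' < ln L) by (apply ln_increasing; lra). lra.
Qed.

(* At [alpha = 1/2] the Renyi series of a product with the Gibbs state factor through the
   Bhattacharyya coefficient of the catalyst marginals. *)
Lemma bhattacharyya_le_of_renyi_half_monotone m k tau p p' q U V :
  (k < m)%nat -> (forall i, 0 <= tau i) -> sumS m tau = 1 -> 0 < tau k ->
  (forall j, 0 <= p j) -> (forall j, 0 <= p' j) -> (forall j, 0 <= q j) ->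
  infinite_sum (fun j => sqrt (p j * q j)) U -> infinite_sum (fun j => sqrt (p' j * q j)) V ->
  0 < V ->
  (forall L L',
     infinite_sum (renyi_series m (/ 2) (fun j i => p j * tau i) (fun j i => q j * tau i)) L ->
     infinite_sum (renyi_series m (/ 2) (fun j i => p' j * PiMax k i) (fun j i => q j * tau i)) L' ->
     renyi_of_sum (/ 2) L >= renyi_of_sum (/ 2) L') ->
  U <= V * sqrt (tau k).
Proof.
  intros Hk Htau Hsum Htauk Hp Hp' Hq HU HV HV0 Hmono.
  apply renyi_of_sum_half_ge; [apply Rmult_lt_0_compat; [|apply sqrt_lt_R0]; assumption|].
  apply Hmono.
  - apply infinite_sum_ext with (2 := HU). intros j. symmetry.
    apply renyi_series_half_product; auto.
  - rewrite Rmult_comm. apply infinite_sum_ext with (fun j => sqrt (tau k) * sqrt (p' j * q j)).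
    + intros j. rewrite renyi_series_half_pure by (auto; lra). ring.
    + apply infinite_sum_scal. exact HV.
Qed.

Section SystemGibbs.

Variables (beta : R) (m : nat) (ES : nat -> R) (kmax : nat).
Hypotheses (hbeta : 0 <= beta) (hm : (2 <= m)%nat)
  (hmax : forall i, (i < m)%nat -> ES i <= ES kmax).

Lemma ZS_ge_card : INR m * boltz beta (ES kmax) <= ZS beta m ES.
Proof.
  unfold ZS, sumS. replace (INR m) with (INR (S (pred m))) by (f_equal; lia).
  apply sum_f_R0_ge_const. intros i Hi. apply boltz_le; [exact hbeta|apply hmax; lia].
Qed.

Lemma ZS_pos : 0 < ZS beta m ES.
Proof.
  pose proof ZS_ge_card. pose proof (boltz_pos beta (ES kmax)).
  assert (2 <= INR m) by exact (le_INR 2 m hm). nra.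
Qed.

Lemma ZS_ratio_ge_2 : 2 <= ZS beta m ES / boltz beta (ES kmax).
Proof.
  pose proof ZS_ge_card. pose proof (boltz_pos beta (ES kmax)).
  assert (2 <= INR m) by exact (le_INR 2 m hm).
  apply Rmult_le_reg_r with (boltz beta (ES kmax)); [lra|].
  unfold Rdiv. rewrite Rmult_assoc, Rinv_l; nra.
Qed.

Lemma tauS_nonneg i : 0 <= tauS beta m ES i.
Proof. left. apply Rdiv_lt_0_compat; [apply boltz_pos|exact ZS_pos]. Qed.

Lemma tauS_max : tauS beta m ES kmax = / (ZS beta m ES / boltz beta (ES kmax)).
Proof.
  pose proof ZS_pos. pose proof (boltz_pos beta (ES kmax)).
  unfold tauS. field. lra.
Qed.

Lemma sumS_tauS : sumS m (tauS beta m ES) = 1.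
Proof.
  pose proof ZS_pos. unfold sumS, tauS, Rdiv. rewrite <- scal_sum.
  change (sum_f_R0 (fun i => boltz beta (ES i)) (pred m)) with (ZS beta m ES).
  field. lra.
Qed.

End SystemGibbs.

Lemma fA_pos a : a <> 0 -> 0 < fA a.
Proof.
  intros Ha. unfold fA. assert (0 < a ^ 2) by (apply pow2_gt_0; exact Ha).
  apply Rmult_lt_0_compat; [lra|]. apply Rdiv_lt_0_compat; lra.
Qed.

Lemma fA_le_sqrt_sub_1 a : 2 <= a -> fA a <= sqrt a - 1.
Proof.
  intros Ha. assert (Ha2 : 0 < a ^ 2) by nra.
  assert (Hr : 1 + fA a = (3 * a ^ 2 + 2) / (2 * (a ^ 2 + 1))) by (unfold fA; field; lra).
  assert (Hr0 : 0 <= 1 + fA a) by (pose proof (fA_pos a ltac:(lra)); lra).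
  assert (Hpoly : (3 * a ^ 2 + 2) ^ 2 <= a * (2 * (a ^ 2 + 1)) ^ 2).
  { set (x := a - 2). assert (0 <= x) by (unfold x; lra).
    replace a with (x + 2) by (unfold x; ring).
    assert (0 <= x ^ 2) by (apply pow_le; lra). assert (0 <= x ^ 3) by (apply pow_le; lra).
    assert (0 <= x ^ 4) by (apply pow_le; lra). assert (0 <= x ^ 5) by (apply pow_le; lra).
    nra. }
  assert (Hsq : (1 + fA a) ^ 2 <= a).
  { rewrite Hr. unfold Rdiv. rewrite Rpow_mult_distr, pow_inv.
    apply Rmult_le_reg_r with ((2 * (a ^ 2 + 1)) ^ 2); [apply pow_lt; lra|].
    rewrite Rmult_assoc, Rinv_l, Rmult_1_r by (apply pow_nonzero; lra). exact Hpoly. }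
  assert (1 + fA a <= sqrt a) by (rewrite <- (sqrt_pow2 _ Hr0); apply sqrt_le_1_alt, Hsq).
  lra.
Qed.

Section CatalystGibbs.

Variables (beta ZC Ebar : R) (e : nat -> R).
Hypotheses (hbeta : 0 <= beta) (he0 : forall j, 0 <= e j) (hemono : Un_growing e)
  (hZC : infinite_sum (fun j => boltz beta (e j)) ZC).

Lemma ZC_pos : 0 < ZC.
Proof.
  apply Rlt_le_trans with (boltz beta (e 0%nat)); [apply boltz_pos|].
  apply (infinite_sum_term_le _ _ hZC). intros j. left. apply boltz_pos.
Qed.

Lemma catalyst_gibbs_pos j : 0 < boltz beta (e j) / ZC.
Proof. apply Rdiv_lt_0_compat; [apply boltz_pos|exact ZC_pos]. Qed.

Lemma catalyst_gibbs_antitone i j : (i <= j)%nat -> boltz beta (e j) / ZC <= boltz beta (e i) / ZC.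
Proof.
  intros Hij. apply Rmult_le_compat_r; [left; apply Rinv_0_lt_compat, ZC_pos|].
  apply boltz_le; [exact hbeta|exact (tech9 e hemono i j Hij)].
Qed.

Lemma catalyst_gibbs_sum : infinite_sum (fun j => boltz beta (e j) / ZC) 1.
Proof.
  pose proof ZC_pos.
  apply infinite_sum_ext with (fun j => / ZC * boltz beta (e j)); [intros j; field; lra|].
  replace 1 with (/ ZC * ZC) by (field; lra). apply infinite_sum_scal, hZC.
Qed.

Lemma eps_set_pos : cv_infty e -> exists x, eps_set beta Ebar e x /\ 0 < x.
Proof.
  intros Hinf. set (T := Ebar / (1 - / 2)).
  assert (Hex : exists n, e (S n) > T).
  { destruct (Hinf T) as [N HN]. exists N. apply HN. lia. }
  destruct (epsilon_smallest (fun n => e (S n) > T) (fun n => Rgt_dec (e (S n)) T) Hex)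
    as [k [Hk Hmin]].
  exists (/ 2 * exp (- beta * e k)). split.
  - exists (/ 2), k. repeat split; try lra; try exact Hk.
    intros k' Hk'. apply Rnot_lt_le. intros Hgt. specialize (Hmin k' Hgt). lia.
  - apply Rmult_lt_0_compat; [lra|apply exp_pos].
Qed.

(* Markov's inequality puts mass at least [W] on the levels [j <= k], where each term of
   the Bhattacharyya series is at least [omega_j * sqrt (gamma^(e k) / ZC)]. *)
Lemma eps_set_le_bhattacharyya om Eom U x :
  (forall j, 0 <= om j) -> infinite_sum om 1 ->
  infinite_sum (fun j => om j * e j) Eom -> Eom <= Ebar -> e 0%nat <= Ebar ->
  infinite_sum (fun j => sqrt (om j * (boltz beta (e j) / ZC))) U ->
  eps_set beta Ebar e x -> x <= sqrt ZC * U.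
Proof.
  intros Hom Hom1 HEom HEomb HEbar HU [W [k [HW [Hcross [_ ->]]]]].
  pose proof ZC_pos as HZ.
  set (P := sum_f_R0 om k). set (T := Ebar / (1 - W)) in Hcross.
  assert (HPW : W <= P).
  { pose proof (tail_mass_le om e k (e (S k)) Eom Hom he0
                  (fun j Hj => tech9 e hemono (S k) j Hj) Hom1 HEom) as Htail.
    assert (HT0 : 0 <= T) by (apply Rdiv_le_0_compat; [pose proof (he0 0%nat)|]; lra).
    assert (HTW : T * (1 - W) = Ebar) by (unfold T; field; lra).
    fold P in Htail. nra. }
  change (exp (- beta * e k)) with (boltz beta (e k)).
  set (b := boltz beta (e k)).
  assert (Hb0 : 0 < b) by apply boltz_pos.
  assert (Hb1 : b <= 1).
  { replace 1 with (boltz beta 0) by (unfold boltz; rewrite Rmult_0_r; apply exp_0).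
    apply boltz_le; [exact hbeta|apply he0]. }
  assert (Hsqrt_b : b <= sqrt ZC * sqrt (b / ZC)).
  { rewrite <- sqrt_mult by (lra || (left; apply catalyst_gibbs_pos)).
    replace (ZC * (b / ZC)) with b by (field; lra). apply le_sqrt_self. lra. }
  pose proof (bhattacharyya_partial_ge om (fun j => boltz beta (e j) / ZC) k
                (probability_le_1 om Hom Hom1) (fun j => Rlt_le _ _ (catalyst_gibbs_pos j))
                (fun j Hj => catalyst_gibbs_antitone j k Hj)) as Hpartial.
  pose proof (sum_incr _ k U HU (fun j => sqrt_pos _)) as HpartialU.
  cbv beta in Hpartial. fold P b in Hpartial.
  assert (HP0 : 0 <= P) by (apply cond_pos_sum, Hom).
  apply Rle_trans with (P * b); [apply Rmult_le_compat_r; lra|].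
  apply Rle_trans with (sqrt ZC * (sqrt (b / ZC) * P)); [nra|].
  apply Rmult_le_compat_l; [apply sqrt_pos|lra].
Qed.

Lemma eps_lub_bounds om Eom U epsC :
  cv_infty e -> is_lub (eps_set beta Ebar e) epsC ->
  (forall j, 0 <= om j) -> infinite_sum om 1 ->
  infinite_sum (fun j => om j * e j) Eom -> Eom <= Ebar -> e 0%nat <= Ebar ->
  infinite_sum (fun j => sqrt (om j * (boltz beta (e j) / ZC))) U ->
  0 < epsC <= sqrt ZC * U.
Proof.
  intros Hinf [Hub Hleast] Hom Hom1 HEom HEomb HEbar HU.
  destruct (eps_set_pos Hinf) as [x [Hx Hx0]].
  split; [exact (Rlt_le_trans _ _ _ Hx0 (Hub x Hx))|].
  apply Hleast. intros y. exact (eps_set_le_bhattacharyya om Eom U y Hom Hom1 HEom HEomb HEbar HU).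
Qed.

End CatalystGibbs.

Lemma fA_sq_eps_sq_bound A epsC ZC U :
  2 <= A -> 0 < ZC -> 0 < epsC <= sqrt ZC * U ->
  0 < fA A ^ 2 * epsC ^ 2 / ZC <= ((sqrt A - 1) * U) ^ 2.
Proof.
  intros HA HZC [Heps0 HepsU].
  pose proof (fA_pos A ltac:(lra)). pose proof (fA_le_sqrt_sub_1 A HA).
  assert (Heps_sq : epsC ^ 2 / ZC <= U ^ 2).
  { apply Rmult_le_reg_r with ZC; [exact HZC|].
    unfold Rdiv. rewrite Rmult_assoc, Rinv_l by lra.
    pose proof (sqrt_sqrt ZC (Rlt_le _ _ HZC)). pose proof (sqrt_pos ZC). nra. }
  assert (0 < epsC ^ 2 / ZC) by (apply Rdiv_lt_0_compat; [apply pow_lt|]; lra).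
  replace (fA A ^ 2 * epsC ^ 2 / ZC) with (fA A ^ 2 * (epsC ^ 2 / ZC)) by (field; lra).
  split; [apply Rmult_lt_0_compat; [apply pow_lt|]; assumption|].
  rewrite Rpow_mult_distr.
  apply Rmult_le_compat; [apply pow_le; lra|lra|apply pow_incr; lra|exact Heps_sq].
Qed.

Theorem mainTheorem8
  (beta : R) (hbeta : 0 < beta)
  (m : nat) (hm : (2 <= m)%nat) (ES : nat -> R) (kmax : nat) (hk : (kmax < m)%nat)
  (hmax : forall i, (i < m)%nat -> ES i <= ES kmax)
  (e : nat -> R) (he0 : forall j, 0 <= e j) (hemono : forall j, e j <= e (S j))
  (heinf : cv_infty e)
  (ZC : R) (hZC : infinite_sum (fun j => boltz beta (e j)) ZC)
  (om om' : nat -> R)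
  (hom : forall j, 0 <= om j) (hom1 : infinite_sum om 1)
  (hom' : forall j, 0 <= om' j) (hom'1 : infinite_sum om' 1)
  (Ebar : R) (hEbar : e 0%nat <= Ebar)
  (hen : exists Eom, infinite_sum (fun j => om j * e j) Eom /\ Eom <= Ebar)
  (hCTO : forall alpha L L', 0 < alpha < 1 ->
     infinite_sum (renyi_series m alpha
        (fun j i => om j * tauS beta m ES i)
        (fun j i => boltz beta (e j) / ZC * tauS beta m ES i)) L ->
     infinite_sum (renyi_series m alpha
        (fun j i => om' j * PiMax kmax i)
        (fun j i => boltz beta (e j) / ZC * tauS beta m ES i)) L' ->
     renyi_of_sum alpha L >= renyi_of_sum alpha L')
  (epsC : R) (hepsC : is_lub (eps_set beta Ebar e) epsC)
  (dopt : R) (hd : infinite_sum (fun j => / 2 * Rabs (om j - om' j)) dopt) :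
  let A := ZS beta m ES / boltz beta (ES kmax) in
  dopt >= / 2 * (fA A ^ 2 * epsC ^ 2 / ZC) /\ / 2 * (fA A ^ 2 * epsC ^ 2 / ZC) > 0.
Proof.
  intro A.
  pose proof (Rlt_le _ _ hbeta) as hbeta0.
  set (g := fun j => boltz beta (e j) / ZC).
  pose proof (catalyst_gibbs_pos beta ZC e hZC) as Hg.
  pose proof (catalyst_gibbs_antitone beta ZC e hbeta0 hemono hZC) as Hg_anti.
  pose proof (catalyst_gibbs_sum beta ZC e hZC) as Hg1.
  assert (Hg0 : forall j, 0 <= g j) by (intros j; left; apply Hg).
  destruct (bhattacharyya_summable om g hom Hg0 hom1 Hg1) as [U HU].
  destruct (bhattacharyya_summable om' g hom' Hg0 hom'1 Hg1) as [V HV].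
  pose proof (ZS_ratio_ge_2 beta m ES kmax hbeta0 hm hmax) as HA.
  pose proof (tauS_max beta m ES kmax hbeta0 hm hmax) as Htau_max.
  fold A in HA, Htau_max.
  assert (HUV : U <= V * / sqrt A).
  { rewrite <- sqrt_inv, <- Htau_max.
    apply (bhattacharyya_le_of_renyi_half_monotone m kmax (tauS beta m ES) om om' g U V hk
             (tauS_nonneg beta m ES kmax hbeta0 hm hmax) (sumS_tauS beta m ES kmax hbeta0 hm hmax));
      try assumption.
    - rewrite Htau_max. apply Rinv_0_lt_compat. lra.
    - exact (bhattacharyya_pos om' g V hom' hom'1 Hg Hg_anti HV).
    - intros L L'. apply hCTO. lra. }
  pose proof (bhattacharyya_pos om g U hom hom1 Hg Hg_anti HU) as HU0.
  destruct hen as [Eom [HEom HEomb]].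
  pose proof (eps_lub_bounds beta ZC Ebar e hbeta0 he0 hemono hZC om Eom U epsC
                heinf hepsC hom hom1 HEom HEomb hEbar HU) as Heps.
  pose proof (trace_distance_ge_bhattacharyya_ratio om om' g U V dopt A
                hom hom' Hg0 Hg1 HU HV hd ltac:(lra) HU0 HUV) as Hd.
  pose proof (fA_sq_eps_sq_bound A epsC ZC U HA (ZC_pos beta ZC e hZC) Heps).
  lra.
Qed.
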